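(* Let $V$ be a finite set, $f:2^V\to\mathbb{R}$ non-decreasing and submodular, $k\ge1$ an integer, $\mathrm{OPT}\subseteq V$ with $|\mathrm{OPT}|=k$ maximizing $f$ among $k$-element subsets of $V$, $A\subseteq V$ with $|A|=k$, and $A'\subseteq A$ with $|A'|<k$. Let $B'\subseteq V\setminus A'$ be the greedy set: starting from $B'=\emptyset$, while $|B'|<k-|A'|$, add an element $e\in V\setminus(A'\cup B')$ maximizing $f(A'\cup B'\cup\{e\})-f(A'\cup B')$. Then \[ f(B'\cup A')\ \ge\ f(A')+\frac{1-\frac1e}{\left\lceil\frac{|\mathrm{OPT}\setminus A'|}{k-|A'|}\right\rceil}\bigl(f(\mathrm{OPT}\cup A')-f(A')\bigr). \]
   Context: $f$ non-decreasing means $f(X)\le f(Y)$ for $X\subseteq Y$; submodular means $f(X\cup\{e\})-f(X)\ge f(Y\cup\{e\})-f(Y)$ for $X\subseteq Y\subseteq V$, $e\notin Y$. *)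

From HB Require Import structures.
From mathcomp Require Import all_boot all_order all_algebra.
From mathcomp Require Import reals sequences exp.
Set Implicit Arguments. Unset Strict Implicit. Unset Printing Implicit Defensive.
Import Order.TTheory GRing.Theory Num.Theory.
Local Open Scope ring_scope.

Section Defs.
Variables (R : realType) (V : finType).

Definition nondecreasing_setfun (f : {set V} -> R) : Prop :=
  forall X Y : {set V}, X \subset Y -> f X <= f Y.

Definition submodular (f : {set V} -> R) : Prop :=
  forall (X Y : {set V}) (e : V), X \subset Y -> e \notin Y ->
    f (e |: X) - f X >= f (e |: Y) - f Y.

Definition greedy_step (f : {set V} -> R) (S : {set V}) (e : V) : Prop :=
  e \notin S /\
  forall x : V, x \notin S -> f (x |: S) - f S <= f (e |: S) - f S.

(* The sequence s of chosen elements is a run of the greedy algorithm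
   starting from the current set S (here S = A' :|: B' so far). *)
Fixpoint greedy_run (f : {set V} -> R) (S : {set V}) (s : seq V) : Prop :=
  match s with
  | [::] => True
  | e :: s' => greedy_step f S e /\ greedy_run f (e |: S) s'
  end.

End Defs.

From HB Require Import structures.
From mathcomp Require Import all_boot all_order all_algebra.
From mathcomp Require Import reals sequences exp.
From mathcomp Require Import lra.
Set Implicit Arguments. Unset Strict Implicit. Unset Printing Implicit Defensive.
Import Order.TTheory GRing.Theory Num.Theory.
Local Open Scope ring_scope.

(* Write [o = |OPT \ A'|] and [m = k - |A'|].  For every superset [S] of
   [A'], adding the [o] elements of [OPT \ A'] raises [f S] at least to
   [f (OPT + A')], and by submodularity this costs at most [o] times the best
   single marginal gain, which the greedy step realises.  So each of the [m]
   greedy steps shrinks the gap to [f (OPT + A')] by a factor [1 - 1/o],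
   leaving at most [(1 - 1/o)^m <= exp (-m/o) <= exp (-1/c)] of it, where
   [c = ceil (o/m)].  Finally [1 - exp (-1/c) >= (1 - 1/e)/c] because
   [1 - y^c <= c (1 - y)] for [0 <= y <= 1]. *)

Section GreedyGap.
Variables (R : realType) (V : finType) (f : {set V} -> R).
Hypothesis f_mono : nondecreasing_setfun f.
Hypothesis f_submod : submodular f.

Lemma marginal_ge0 (S : {set V}) (x : V) : 0 <= f (x |: S) - f S.
Proof. by rewrite subr_ge0; apply: f_mono; apply: subsetUr. Qed.

Lemma marginal_union_le (S T : {set V}) (d : R) :
  (forall x, f (x |: S) - f S <= d) -> f (T :|: S) - f S <= #|T|%:R * d.
Proof.
move=> le_d; rewrite cardE -{1}(set_enum T).
elim: (enum T) => [|x t IH] /=.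
  by rewrite mul0r (_ : [set x in [::]] = set0) ?set0U ?subrr // -setP => y; rewrite !inE.
have -> : [set y in x :: t] :|: S = x |: ([set y in t] :|: S).
  by apply/setP=> y; rewrite !inE orbA.
set Y := [set y in t] :|: S.
have gain_x : f (x |: Y) - f Y <= d.
  have [xY | xNY] := boolP (x \in Y).
    by rewrite (setUidPr _) ?sub1set // subrr; apply: le_trans (marginal_ge0 S x) (le_d x).
  by apply: le_trans (le_d x); apply: f_submod => //; apply: subsetUr.
by rewrite -nat1r mulrDl mul1r; lra.
Qed.

Lemma greedy_step_max (S : {set V}) (e : V) : greedy_step f S e ->
  forall x, f (x |: S) - f S <= f (e |: S) - f S.
Proof.
case=> _ e_max x; have [xS | /e_max //] := boolP (x \in S).
by rewrite (setUidPr _) ?sub1set // subrr; apply: marginal_ge0.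
Qed.

Lemma greedy_step_gap (S T : {set V}) (e : V) (F : R) :
  (0 < #|T|)%N -> F <= f (T :|: S) -> greedy_step f S e ->
  F - f (e |: S) <= (1 - #|T|%:R^-1) * (F - f S).
Proof.
move=> T_gt0 le_F step; set n : R := #|T|%:R.
have n_gt0 : 0 < n by rewrite ltr0n.
have gap_le : F - f S <= n * (f (e |: S) - f S).
  have := marginal_union_le T (greedy_step_max step); lra.
have gain_ge : (F - f S) / n <= f (e |: S) - f S by rewrite ler_pdivrMr // mulrC.
by rewrite mulrBl mul1r [_^-1 * _]mulrC; lra.
Qed.

Lemma greedy_run_gap (s : seq V) (S T : {set V}) (F : R) :
  (0 < #|T|)%N -> F <= f (T :|: S) -> greedy_run f S s ->
  F - f ([set x in s] :|: S) <= (1 - #|T|%:R^-1) ^+ size s * (F - f S).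
Proof.
move=> T_gt0; elim: s S => [|e s IH] S le_F /=.
  by rewrite expr0 mul1r (_ : [set x in [::]] = set0) ?set0U // -setP => y; rewrite !inE.
case=> step run; have le_F' : F <= f (T :|: (e |: S)).
  by apply: le_trans le_F _; apply/f_mono/setUS/subsetUr.
have -> : [set y in e :: s] :|: S = [set y in s] :|: (e |: S).
  by apply/setP=> y; rewrite !inE orbA (orbC (y == e)).
apply: le_trans (IH _ le_F' run) _; rewrite exprSr -mulrA.
apply: ler_wpM2l; last exact: greedy_step_gap.
by apply: exprn_ge0; rewrite subr_ge0 invf_le1 ?ltr0n // ler1n.
Qed.

End GreedyGap.

Lemma one_sub_expn_le (R : realFieldType) (y : R) (c : nat) :
  0 <= y <= 1 -> 1 - y ^+ c <= c%:R * (1 - y).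
Proof.
case/andP=> y_ge0 y_le1; elim: c => [|c IH]; first by rewrite expr0 mul0r subrr.
have /andP[yc_ge0 yc_le1] : 0 <= y ^+ c <= 1 by rewrite exprn_ge0 // exprn_ile1.
by rewrite exprS -nat1r mulrDl mul1r; nra.
Qed.

Lemma one_sub_expR_inv_ge (R : realType) (c : nat) : (0 < c)%N ->
  (1 - (expR 1)^-1) / c%:R <= 1 - expR (- c%:R^-1) :> R.
Proof.
move=> c_gt0; have cR_gt0 : 0 < c%:R :> R by rewrite ltr0n.
have y_expc : expR (- c%:R^-1) ^+ c = (expR 1)^-1 :> R.
  by rewrite -expRM_natl mulrN mulfV ?gt_eqF // expRN.
have y_01 : 0 <= expR (- (c%:R : R)^-1) <= 1.
  by rewrite expR_ge0 expR_le1 oppr_le0 invr_ge0 ltW.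
have := one_sub_expn_le c y_01.
by rewrite y_expc ler_pdivrMr // mulrC.
Qed.

Lemma expn_one_sub_inv_le (R : realType) (o m : nat) : (0 < o)%N ->
  (1 - o%:R^-1) ^+ m <= expR (- (m%:R / o%:R)) :> R.
Proof.
move=> o_gt0; have q_ge0 : 0 <= 1 - o%:R^-1 :> R.
  by rewrite subr_ge0 invf_le1 ?ltr0n // ler1n.
rewrite -mulrN expRM_natl lerXn2r ?nnegrE ?expR_ge0 //.
by have := expR_ge1Dx (- (o%:R : R)^-1); lra.
Qed.

Lemma greedy_ratio_ge (R : realType) (o m c : nat) :
  (0 < o)%N -> (0 < m)%N -> (o <= c * m)%N ->
  (1 - (expR 1)^-1) / c%:R <= 1 - (1 - o%:R^-1) ^+ m :> R.
Proof.
move=> o_gt0 m_gt0 o_le_cm.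
have c_gt0 : (0 < c)%N by move: o_le_cm; case: c => //; rewrite mul0n leqNgt o_gt0.
apply: (le_trans (one_sub_expR_inv_ge R c_gt0)).
rewrite lerD2l lerN2; apply: (le_trans (expn_one_sub_inv_le R m o_gt0)).
rewrite ler_expR lerN2 ler_pdivlMr ?ltr0n // mulrC ler_pdivrMr ?ltr0n //.
by rewrite -natrM ler_nat mulnC.
Qed.

Lemma ceil_ratio_nat (R : archiRealFieldType) (o m : nat) : (0 < m)%N ->
  exists2 c : nat, Num.ceil (o%:R / m%:R : R) = c%:Z & (o <= c * m)%N.
Proof.
move=> m_gt0; set x : R := o%:R / m%:R.
have ceil_ge0 : 0 <= Num.ceil x by rewrite -(ceil0 R) le_ceil ?divr_ge0.
have [c def_c] : exists c : nat, Num.ceil x = c%:Z.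
  by case: (Num.ceil x) ceil_ge0 => [c|//] _; exists c.
have := ceil_ge x; rewrite def_c => x_le_c.
exists c => //; rewrite -(ler_nat R) natrM -ler_pdivrMr ?ltr0n //.
Qed.

Theorem mainTheorem3 (R : realType) (V : finType) (f : {set V} -> R) (k : nat)
  (OPT A A' : {set V}) (s : seq V) :
  nondecreasing_setfun f -> submodular f -> (1 <= k)%N ->
  #|OPT| = k -> (forall S : {set V}, #|S| = k -> f S <= f OPT) ->
  #|A| = k -> A' \subset A -> (#|A'| < k)%N ->
  greedy_run f A' s -> size s = (k - #|A'|)%N ->
  let B' := [set x in s] in
  f (B' :|: A') >=
    f A' + (1 - (expR 1)^-1)
             / (Num.ceil ((#|OPT :\: A'|)%:R / (k - #|A'|)%N%:R : R))%:~R
             * (f (OPT :|: A') - f A').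
Proof.
move=> f_mono f_submod _ _ _ _ _ A'_lt_k run size_s /=.
set m := (k - #|A'|)%N; set F := f (OPT :|: A').
have m_gt0 : (0 < m)%N by rewrite subn_gt0.
have [o_eq0 | o_gt0] := posnP #|OPT :\: A'|.
  by rewrite o_eq0 mul0r ceil0 invr0 mulr0 mul0r addr0; apply/f_mono/subsetUr.
have F_le : F <= f ((OPT :\: A') :|: A').
  by apply/f_mono/subsetP=> x; rewrite !inE; case: (x \in A'); rewrite ?orbT ?orbF.
have gap_le := greedy_run_gap f_mono f_submod o_gt0 F_le run.
have gap_ge0 : 0 <= F - f A' by rewrite subr_ge0; apply/f_mono/subsetUr.
have [c -> o_le_cm] := ceil_ratio_nat R #|OPT :\: A'| m_gt0.
have := ler_wpM2r gap_ge0 (greedy_ratio_ge R o_gt0 m_gt0 o_le_cm).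
by rewrite size_s -/m in gap_le; lra.
Qed.
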